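(* Assume that $|l+L|\leq N$. Set $\vec{N} = (N+L,N-L)$. Parameterize a $2\times 2$ complex matrix as $Z=\begin{pmatrix}x_1 & y_1\\ x_2 & y_2\end{pmatrix}$. Then the polynomial $\varphi_\sigma$ defined by \[ \varphi_\sigma = \begin{cases} (x_{1}\bar{x}_{2})^{N-l-L}(\bar{x}_{2})^{2(l+L)}(x_{1}y_{2}-x_{2}y_{1})^{l+2L}, & \text{if } l+L\ge 0,\ l+2L\ge 0;\\ (x_{1}\bar{x}_{2})^{N-l-L}(\bar{x}_{2})^{2(l+L)}(\bar{x}_{1}\bar{y}_{2}-\bar{x}_{2}\bar{y}_{1})^{-(l+2L)}, & \text{if } l+L\ge 0,\ l+2L\le 0;\\ (x_{1}\bar{x}_{2})^{N+l+L}(x_{1})^{-2(l+L)}(x_{1}y_{2}-x_{2}y_{1})^{l+2L}, & \text{if } l+L\le 0,\ l+2L\ge 0;\\ (x_{1}\bar{x}_{2})^{N+l+L}(x_{1})^{-2(l+L)}(\bar{x}_{1}\bar{y}_{2}-\bar{x}_{2}\bar{y}_{1})^{-(l+2L)}, & \text{if } l+L\le 0,\ l+2L\le 0 \end{cases} \] is a bi-$(\vec{N},\chi_{-l}\otimes\chi_{l+2L})$-equivariant polynomial function in $\mathbb{C}[\mathrm{Mat}_{2}^{\mathbb{R}}]$. The restriction map $\iota_2: \mathbb{C}[\mathrm{Mat}_{2}^{\mathbb{R}}]\rightarrow C^\infty(\mathrm{U}_2)$ sends $\varphi_\sigma$ to a smooth function $\iota_2(\varphi_\sigma)$ living in the minimal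 $K$-type $\tau_\sigma$ of $\sigma$. More precisely, $\iota_2(\varphi_\sigma)\in \tau_{\sigma,-l-L}$.
   Context: For an integer $k$, $\chi_k$ denotes the unitary character $z\mapsto (z/|z|)^k$ of $\mathbb{C}^\times$ (also restricted to $\mathrm{U}_1$), and $|z|_{\mathbb{C}}=z\bar z$. Let $N\geq 0$, $m$, $L$ be integers and let $\sigma = \mathrm{Ind}_{B_{\mathrm{GL}_2}}^{\mathrm{GL}_2(\mathbb{C})} |\cdot|_{\mathbb{C}}^{m/2}\chi_{N+L}\otimes |\cdot|_{\mathbb{C}}^{m/2}\chi_{-N+L}$ (normalized induction from the upper triangular Borel). Let $\chi$ be a character of $\mathbb{C}^\times$ with $\chi(a)=|a|_{\mathbb{C}}^{u_0}\chi_l(a/|a|)$ for some $l\in\mathbb{Z}$, $u_0\in\mathbb{C}$. The minimal $\mathrm{U}_2$-type $\tau_\sigma$ of $\sigma$ has highest weight $(N+L,-N+L)$ and decomposes into one-dimensional weight spaces $\tau_{\sigma,k}=\{v\in\tau_\sigma : \sigma(\mathrm{diag}(e^{i\theta},e^{-i\theta}))v=e^{2ik\theta}v\}$, $-N\le k\le N$. $\mathbb{C}[\mathrm{Mat}_2^{\mathbb{R}}]$ is the space of complex polynomials in the real and imaginary parts of the entries of $Z$ (equivalently in the entries of $Z$ and $\bar Z$), on which $\mathrm{U}_2$ acts by right translation $f(Z,\bar Z)\mapsto f(Zk,\bar Z\bar k)$; $\iota_2$ is restriction of a polynomial to $\mathrm{U}_2$ (so $\iota_2(f)(k)=f(k,\bar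 k)$), which is $\mathrm{U}_2$-equivariant. ''Bi-$(\vec N,\chi_{-l}\otimes\chi_{l+2L})$-equivariant'' means: equivariant under left multiplication by the diagonal torus of $\mathrm{U}_2$ via the character $\chi_{N+L}\otimes\chi_{-N+L}$ (so that the restriction lies in $\mathrm{Ind}_{T\cap\mathrm{U}_2}^{\mathrm{U}_2}\chi_{N+L}\otimes\chi_{-N+L}$), and under right multiplication by $\mathrm{diag}(k_1,k_2)$, $k_1,k_2\in\mathrm{U}_1$, via $\chi_{-l}(k_1)\chi_{l+2L}(k_2)$. *)

From HB Require Import structures.
From mathcomp Require Import all_boot all_order all_algebra.
From mathcomp Require Import reals.
From mathcomp Require Import complex.
Set Implicit Arguments. Unset Strict Implicit. Unset Printing Implicit Defensive.
Import Order.TTheory GRing.Theory Num.Theory.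
Local Open Scope ring_scope.
Local Open Scope complex_scope.

Section Defs.
Variable R : realType.
Local Notation C := (R[i]).

Definition chi (k : int) (z : C) : C := (z / `|z|) ^ k.

Definition inU1 (z : C) : Prop := z * z^* = 1.

Definition conjT (k : 'M[C]_2) : 'M[C]_2 := (map_mx Num.conj k)^T.
Definition inU2 (k : 'M[C]_2) : Prop := k *m conjT k = 1%:M.

Definition diag2 (a b : C) : 'M[C]_2 :=
  \matrix_(i < 2, j < 2) (if i == j then (if i == 0 :> 'I_2 then a else b) else 0).

(* Polynomial functions in the entries of Z and Zbar, i.e. C[Mat_2^R]:
   the C-algebra of functions generated by the coordinate functions
   Z |-> Z i j and Z |-> conj (Z i j). *)
Inductive is_polyfun : ('M[C]_2 -> C) -> Prop :=
  | pf_const (c : C) : is_polyfun (fun _ => c)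
  | pf_coord (i j : 'I_2) : is_polyfun (fun Z => Z i j)
  | pf_conjcoord (i j : 'I_2) : is_polyfun (fun Z => (Z i j)^*)
  | pf_add f g : is_polyfun f -> is_polyfun g -> is_polyfun (fun Z => f Z + g Z)
  | pf_mul f g : is_polyfun f -> is_polyfun g -> is_polyfun (fun Z => f Z * g Z)
  | pf_ext f g : (forall Z, f Z = g Z) -> is_polyfun f -> is_polyfun g.

(* bi-(vec N, chi_a (x) chi_b)-equivariance on all of Mat_2:
   left torus of U_2 acts through chi_{N+L} (x) chi_{-N+L},
   right torus through chi_a (x) chi_b. *)
Definition bi_equivariant (N : nat) (L a b : int) (f : 'M[C]_2 -> C) : Prop :=
  forall (t1 t2 k1 k2 : C) (Z : 'M[C]_2),
    inU1 t1 -> inU1 t2 -> inU1 k1 -> inU1 k2 ->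
    f (diag2 t1 t2 *m Z *m diag2 k1 k2)
      = chi (N%:Z + L) t1 * chi (- N%:Z + L) t2 * chi a k1 * chi b k2 * f Z.

(* the restriction map iota_2 : C[Mat_2^R] -> C^infty(U_2);
   functions on U_2 are represented by functions on 'M_2, only their
   values at unitary matrices being relevant. *)
Definition iota2 (f : 'M[C]_2 -> C) : 'M[C]_2 -> C := f.

Definition in_Ind (N : nat) (L : int) (f : 'M[C]_2 -> C) : Prop :=
  forall (t1 t2 : C) (k : 'M[C]_2), inU1 t1 -> inU1 t2 -> inU2 k ->
    f (diag2 t1 t2 *m k) = chi (N%:Z + L) t1 * chi (- N%:Z + L) t2 * f k.

(* highest weight vector of weight (N+L, -N+L) in the induced representation:
   k |-> k_11^(2N) det(k)^(L-N) *)
Definition hw_vec (N : nat) (L : int) (k : 'M[C]_2) : C :=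
  (k 0 0) ^+ (2 * N) * (\det k) ^ (L - N%:Z).

(* tau_sigma : the U_2-subrepresentation of the induced representation
   (right translation) generated by the highest weight vector, i.e.
   the span of the right U_2-translates of hw_vec. *)
Definition in_tau (N : nat) (L : int) (f : 'M[C]_2 -> C) : Prop :=
  exists (n : nat) (c : 'I_n -> C) (g : 'I_n -> 'M[C]_2),
    (forall i, inU2 (g i)) /\
    forall k, inU2 k -> f k = \sum_(i < n) c i * hw_vec N L (k *m g i).

(* weight space tau_{sigma,w} condition:
   sigma(diag(s, s^-1)) f = s^(2w) f for all s in U_1
   (sigma acts by right translation). *)
Definition weight_vec (w : int) (f : 'M[C]_2 -> C) : Prop :=
  forall (s : C) (k : 'M[C]_2), inU1 s -> inU2 k ->
    f (k *m diag2 s s^-1) = s ^ (2 * w) * f k.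

Definition in_tau_weight (N : nat) (L w : int) (f : 'M[C]_2 -> C) : Prop :=
  in_tau N L f /\ weight_vec w f.

Definition phi_sigma (N : nat) (L l : int) (Z : 'M[C]_2) : C :=
  let x1 := Z 0 0 in let y1 := Z 0 1 in
  let x2 := Z 1 0 in let y2 := Z 1 1 in
  let dZ := x1 * y2 - x2 * y1 in
  let dZb := x1^* * y2^* - x2^* * y1^* in
  (if 0 <= l + L then (x1 * x2^*) ^ (N%:Z - l - L) * (x2^*) ^ (2 * (l + L))
   else (x1 * x2^*) ^ (N%:Z + l + L) * x1 ^ (- (2 * (l + L))))
  * (if 0 <= l + 2 * L then dZ ^ (l + 2 * L) else dZb ^ (- (l + 2 * L))).

End Defs.

From HB Require Import structures.
From mathcomp Require Import all_boot all_order all_algebra.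
From mathcomp Require Import reals.
From mathcomp Require Import complex.
From mathcomp Require Import ring zify.
Import Order.TTheory GRing.Theory Num.Theory.
Local Open Scope ring_scope.
Set Implicit Arguments. Unset Strict Implicit. Unset Printing Implicit Defensive.

(* With j = N + l + L and q = l + 2L, the four cases of phi_sigma are the single
   polynomial x1^(2N-j) conj(x2)^j det^q, where det^q is read as conj(det)^(-q)
   when q < 0.  Each factor transforms by a character of the two diagonal tori,
   which gives the bi-equivariance, and specialising the torus elements gives the
   Ind and weight conditions.  On U_2 one has conj(x2) = -y1/det and
   conj(det) = det^-1, so phi_sigma restricts to +-x1^(2N-j) y1^j det^(L-N).
   By Vandermonde, x^(2N-j) y^j is a combination of the (x + m y)^(2N), m <= 2N,
   and (x1 + m y1)^(2N) det^(L-N) is a multiple of the highest weight vector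
   translated by a real rotation of slope m. *)

Lemma det_mx22 (F : comNzRingType) (A : 'M[F]_2) :
  \det A = A 0 0 * A 1 1 - A 1 0 * A 0 1.
Proof.
rewrite (expand_det_row _ 0) !big_ord_recl big_ord0 /cofactor !det_mx11 !mxE /=.
rewrite expr0 expr1 !mul1r mulN1r addr0 mulrN [A 0 (lift _ _) * _]mulrC.
by congr (_ * A _ _ - A _ _ * A _ _); apply: val_inj.
Qed.

Lemma mulmx22E (F : comNzRingType) (A B : 'M[F]_2) i j :
  (A *m B) i j = A i 0 * B 0 j + A i 1 * B 1 j.
Proof.
rewrite !mxE !big_ord_recl big_ord0 addr0.
by congr (A i _ * B _ j + A i _ * B _ j); apply: val_inj.
Qed.

Lemma ord2P (i : 'I_2) : i = 0 \/ i = 1.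
Proof. by case: i => [[|[|//]]] ?; [left | right]; apply: val_inj. Qed.

Lemma span_binomial_powers (F : numFieldType) (M j : nat) : (j <= M)%N ->
  exists w : 'I_M.+1 -> F, forall x y : F,
    x ^+ (M - j) * y ^+ j = \sum_(m < M.+1) w m * (x + m%:R * y) ^+ M.
Proof.
move=> j_le; pose V := Vandermonde M.+1 (\row_(m < M.+1) (m : nat)%:R : 'rV[F]_M.+1).
have V_unit : V \in unitmx.
  rewrite unitmxE unitfE det_Vandermonde; apply/prodf_neq0 => i _.
  apply/prodf_neq0 => m lt_im; rewrite !mxE subr_eq0 eqr_nat.
  by rewrite neq_ltn lt_im orbT.
have bin_neq0 : ('C(M, j)%:R : F) != 0 by rewrite pnatr_eq0 -lt0n bin_gt0.
pose j' : 'I_M.+1 := Ordinal (j_le : (j < M.+1)%N).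
exists (fun m => invmx V m j' / 'C(M, j)%:R) => x y.
pose c : 'rV[F]_M.+1 := \row_i (x ^+ (M - i) * y ^+ i * 'C(M, i)%:R).
have cV : c *m V = \row_(m < M.+1) (x + m%:R * y) ^+ M.
  apply/rowP => m; rewrite !mxE exprDn; apply: eq_bigr => i _.
  by rewrite !mxE mulr_natr exprMn; ring.
have := congr1 (fun r : 'rV[F]_M.+1 => (r *m invmx V) 0 j') cV.
rewrite /= mulmxK // !mxE /= => c_j.
apply: (mulIf bin_neq0); rewrite mulr_suml c_j.
by apply: eq_bigr => m _; rewrite mxE mulrAC divfK // mulrC.
Qed.

Section UnitaryGroups.
Variable R : realType.
Local Notation C := R[i].

Lemma inU1_neq0 (z : C) : inU1 z -> z != 0.
Proof. by move=> zz1; rewrite -unitfE; apply/unitrPr; exists z^*. Qed.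

Lemma inU1_conj (z : C) : inU1 z -> z^* = z^-1.
Proof. by move/mulr1_eq. Qed.

Lemma inU1_norm (z : C) : inU1 z -> `|z| = 1.
Proof. by move=> zz1; apply/eqP; rewrite -sqrp_eq1 // sqr_normc zz1. Qed.

Lemma chi_inU1 (k : int) (z : C) : inU1 z -> chi k z = z ^ k.
Proof. by move=> zz1; rewrite /chi inU1_norm // divr1. Qed.

Lemma inU1_1 : inU1 (1 : C).
Proof. by rewrite /inU1 conjC1 mulr1. Qed.

Lemma inU1V (z : C) : inU1 z -> inU1 z^-1.
Proof. by move=> zz1; rewrite /inU1 -(inU1_conj zz1) conjCK mulrC. Qed.

Lemma diag2_11 : diag2 (1 : C) 1 = 1%:M.
Proof. by apply/matrixP => i j; rewrite !mxE; case: (i == j); first case: ifP. Qed.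

Lemma det_diag2 (a b : C) : \det (diag2 a b) = a * b.
Proof. by rewrite det_mx22 !mxE /= mulr0 subr0. Qed.

Lemma diag2_mulmx_entry (t1 t2 k1 k2 : C) (Z : 'M[C]_2) i j :
  (diag2 t1 t2 *m Z *m diag2 k1 k2) i j
  = (if i == 0 then t1 else t2) * Z i j * (if j == 0 then k1 else k2).
Proof.
by rewrite !mulmx22E !mxE; case: (ord2P i) => ->; case: (ord2P j) => -> /=;
  rewrite ?(mulr0, mul0r, addr0, add0r).
Qed.

Lemma det_diag2_mulmx (t1 t2 k1 k2 : C) (Z : 'M[C]_2) :
  \det (diag2 t1 t2 *m Z *m diag2 k1 k2) = t1 * t2 * k1 * k2 * \det Z.
Proof. by rewrite !det_mulmx !det_diag2; ring. Qed.

Lemma inU2_det (k : 'M[C]_2) : inU2 k -> \det k * (\det k)^* = 1.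
Proof.
move=> kk1; have := congr1 determinant kk1.
by rewrite det_mulmx det1 /conjT det_tr det_map_mx.
Qed.

Lemma inU2_conj10 (k : 'M[C]_2) : inU2 k -> (k 1 0)^* = - k 0 1 / \det k.
Proof.
move=> kk1; have kU := (mulmx1_unit kk1).1.
have -> : (k 1 0)^* = conjT k 0 1 by rewrite !mxE.
rewrite -[conjT k](mulKmx kU) kk1 mulmx1 /invmx kU !mxE /cofactor det_mx11 !mxE /=.
by rewrite expr1 mulN1r mulrC; congr (- k _ _ / _); apply: val_inj.
Qed.

Lemma is_polyfunX (f : 'M[C]_2 -> C) (n : nat) :
  is_polyfun f -> is_polyfun (fun Z => f Z ^+ n).
Proof.
move=> pf; elim: n => [|n IHn].
  by apply: (pf_ext _ (pf_const 1)) => Z; rewrite expr0.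
by apply: (pf_ext _ (pf_mul pf IHn)) => Z; rewrite exprS.
Qed.

Lemma is_polyfun_conj (f : 'M[C]_2 -> C) :
  is_polyfun f -> is_polyfun (fun Z => (f Z)^*).
Proof.
elim=> {f} [c | i j | i j | f g _ pf _ pg | f g _ pf _ pg | f g fg _ pf].
- exact: pf_const.
- exact: pf_conjcoord.
- by apply: (pf_ext _ (pf_coord R i j)) => Z; exact: (esym (conjCK _)).
- by apply: (pf_ext _ (pf_add pf pg)) => Z; rewrite rmorphD.
- by apply: (pf_ext _ (pf_mul pf pg)) => Z; rewrite rmorphM.
- by apply: (pf_ext _ pf) => Z; rewrite fg.
Qed.

Lemma is_polyfun_det : is_polyfun (fun Z : 'M[C]_2 => \det Z).
Proof.
apply: (pf_ext (f := fun Z => Z 0 0 * Z 1 1 + -1 * (Z 1 0 * Z 0 1))).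
  by move=> Z; rewrite det_mx22 mulN1r.
by do ![apply: pf_add | apply: pf_mul | apply: pf_coord | apply: pf_const].
Qed.

Definition det_pow (q : int) (Z : 'M[C]_2) : C :=
  if 0 <= q then \det Z ^ q else (\det Z)^* ^ (- q).

Lemma is_polyfun_det_pow (q : int) : is_polyfun (det_pow q).
Proof.
rewrite /det_pow; case: (lerP 0 q) => [q_ge0 | q_lt0].
  by apply: (pf_ext _ (is_polyfunX `|q|%N is_polyfun_det)) => Z; rewrite exprnP gez0_abs.
have := is_polyfunX `|q|%N (is_polyfun_conj is_polyfun_det); apply: pf_ext => Z.
by rewrite exprnP ltz0_abs.
Qed.

Lemma det_pow_inU2 (q : int) (k : 'M[C]_2) : inU2 k -> det_pow q k = \det k ^ q.
Proof.
move=> kk1; rewrite /det_pow; case: ifP => // _.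
by rewrite -(mulr1_eq (inU2_det kk1)) exprz_inv opprK.
Qed.

Definition phi_normal (N j : nat) (q : int) (Z : 'M[C]_2) : C :=
  Z 0 0 ^+ (2 * N - j) * (Z 1 0)^* ^+ j * det_pow q Z.

Lemma is_polyfun_phi_normal (N j : nat) (q : int) : is_polyfun (phi_normal N j q).
Proof.
apply: pf_mul (is_polyfun_det_pow q).
by apply: pf_mul; apply: is_polyfunX; [apply: pf_coord | apply: pf_conjcoord].
Qed.

Lemma phi_sigmaE (N j : nat) (L l : int) :
  j%:Z = N%:Z + (l + L) -> (j <= 2 * N)%N ->
  phi_sigma N L l =1 phi_normal N j (l + 2 * L).
Proof.
move=> def_j j_le Z; rewrite /phi_sigma /phi_normal /det_pow det_mx22 rmorphB !rmorphM /=.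
congr (_ * _); case: ifP => lL_ge0.
- have -> : N%:Z - l - L = (2 * N - j)%N by lia.
  have -> : 2 * (l + L) = (2 * j - 2 * N)%N :> int by lia.
  rewrite -!exprnP exprMn -mulrA -exprD; congr (_ * _ ^+ _); lia.
- have -> : N%:Z + l + L = j by lia.
  have -> : - (2 * (l + L)) = (2 * N - 2 * j)%N :> int by lia.
  rewrite -!exprnP exprMn mulrAC -exprD; congr (_ ^+ _ * _); lia.
Qed.

Lemma det_pow_diag2_mulmx (q : int) (t1 t2 k1 k2 : C) (Z : 'M[C]_2) :
  inU1 t1 -> inU1 t2 -> inU1 k1 -> inU1 k2 ->
  det_pow q (diag2 t1 t2 *m Z *m diag2 k1 k2) = (t1 * t2 * k1 * k2) ^ q * det_pow q Z.
Proof.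
move=> u1 u2 u3 u4; rewrite /det_pow det_diag2_mulmx; case: ifP => _.
  by rewrite expfzMl.
rewrite !rmorphM /= (inU1_conj u1) (inU1_conj u2) (inU1_conj u3) (inU1_conj u4).
have -> : t1^-1 * t2^-1 * k1^-1 * k2^-1 = (t1 * t2 * k1 * k2)^-1 by rewrite !invfM.
by rewrite expfzMl exprz_inv opprK.
Qed.

Lemma phi_normal_bi_equivariant (N j : nat) (L l : int) :
  j%:Z = N%:Z + (l + L) -> (j <= 2 * N)%N ->
  bi_equivariant N L (- l) (l + 2 * L) (phi_normal N j (l + 2 * L)).
Proof.
move=> def_j j_le t1 t2 k1 k2 Z u1 u2 u3 u4.
rewrite /phi_normal det_pow_diag2_mulmx // !diag2_mulmx_entry /= !rmorphM /=.
rewrite (inU1_conj u2) (inU1_conj u3) !chi_inU1 // !exprMn !exprnP !exprz_inv !expfzMl.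
have expD (z : C) (m n : int) : inU1 z -> z ^ (m + n) = z ^ m * z ^ n.
  by move=> zz1; rewrite expfzDr ?inU1_neq0.
have -> : N%:Z + L = (2 * N - j)%N%:Z + (l + 2 * L) by lia.
have -> : - N%:Z + L = - j%:Z + (l + 2 * L) by lia.
have -> : - l = (2 * N - j)%N%:Z - j%:Z + (l + 2 * L) by lia.
rewrite !expD //; ring.
Qed.

Lemma phi_normal_inU2 (N j : nat) (L l : int) (k : 'M[C]_2) :
  j%:Z = N%:Z + (l + L) -> inU2 k ->
  phi_normal N j (l + 2 * L) k
  = (-1) ^+ j * (k 0 0 ^+ (2 * N - j) * k 0 1 ^+ j * \det k ^ (L - N%:Z)).
Proof.
move=> def_j kk1; have dk_neq0 : \det k != 0.
  by rewrite -unitfE; apply/unitrPr; exists (\det k)^*; apply: inU2_det.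
rewrite /phi_normal det_pow_inU2 // inU2_conj10 // mulNr (exprNn (k 0 1 / _)) exprMn exprVn.
have -> : \det k ^ (l + 2 * L) = \det k ^+ j * \det k ^ (L - N%:Z).
  by rewrite exprnP -expfzDr //; congr (_ ^ _); lia.
by field; rewrite expf_neq0.
Qed.

Lemma bi_equivariant_in_Ind (N : nat) (L a b : int) (f : 'M[C]_2 -> C) :
  bi_equivariant N L a b f -> in_Ind N L f.
Proof.
move=> eq_f t1 t2 k u1 u2 _; have := eq_f t1 t2 1 1 k u1 u2 inU1_1 inU1_1.
by rewrite diag2_11 mulmx1 => ->; rewrite !(chi_inU1 _ inU1_1) !exp1rz !mulr1.
Qed.

Lemma bi_equivariant_weight_vec (N : nat) (L a b w : int) (f : 'M[C]_2 -> C) :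
  a - b = 2 * w -> bi_equivariant N L a b f -> weight_vec w f.
Proof.
move=> abw eq_f s k us _; have := eq_f 1 1 s s^-1 k inU1_1 inU1_1 us (inU1V us).
rewrite diag2_11 mul1mx => ->; rewrite !(chi_inU1 _ inU1_1) !exp1rz !mul1r.
by rewrite (chi_inU1 _ us) (chi_inU1 _ (inU1V us)) exprz_inv -expfzDr ?inU1_neq0 // -abw.
Qed.

Definition rot2 (c s : C) : 'M[C]_2 :=
  \matrix_(i, j) if i == j then c else if i == 0 then - s else s.

Lemma det_rot2 (c s : C) : \det (rot2 c s) = c ^+ 2 + s ^+ 2.
Proof. by rewrite det_mx22 !mxE /=; ring. Qed.

Lemma rot2_inU2 (c s : C) :
  c^* = c -> s^* = s -> c ^+ 2 + s ^+ 2 = 1 -> inU2 (rot2 c s).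
Proof.
move=> c_real s_real cs1; apply/matrixP => i j.
rewrite mulmx22E !mxE; case: (ord2P i) => ->; case: (ord2P j) => -> /=;
  by rewrite ?rmorphN /= c_real ?s_real -?cs1; ring.
Qed.

Lemma mulmx_rot2_00 (k : 'M[C]_2) (c s : C) :
  (k *m rot2 c s) 0 0 = k 0 0 * c + k 0 1 * s.
Proof. by rewrite mulmx22E !mxE. Qed.

Lemma in_tau_ext (N : nat) (L : int) (f g : 'M[C]_2 -> C) :
  (forall k, inU2 k -> f k = g k) -> in_tau N L f -> in_tau N L g.
Proof.
move=> fg [n [c [h [hU fE]]]]; exists n, c, h; split => // k kk1.
by rewrite -fg // fE.
Qed.

Lemma in_tauZ (N : nat) (L : int) (a : C) (f : 'M[C]_2 -> C) :
  in_tau N L f -> in_tau N L (fun k => a * f k).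
Proof.
move=> [n [c [h [hU fE]]]]; exists n, (fun i => a * c i), h; split => // k kk1.
by rewrite fE // mulr_sumr; apply: eq_bigr => i _; rewrite mulrA.
Qed.

Lemma in_tau_monomial (N j : nat) (L : int) : (j <= 2 * N)%N ->
  in_tau N L (fun k : 'M[C]_2 => k 0 0 ^+ (2 * N - j) * k 0 1 ^+ j * \det k ^ (L - N%:Z)).
Proof.
move=> j_le; have [w wE] := span_binomial_powers C j_le.
pose c (m : nat) : C := (sqrtC (1 + m%:R ^+ 2))^-1.
have sq_ge0 m : 0 <= 1 + m%:R ^+ 2 :> C by rewrite addr_ge0 ?exprn_ge0 ?ler0n.
have sq_neq0 m : 1 + m%:R ^+ 2 != 0 :> C.
  by rewrite paddr_eq0 ?exprn_ge0 ?ler0n // oner_eq0.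
have c_ge0 m : 0 <= c m by rewrite invr_ge0 sqrtC_ge0.
have c_neq0 m : c m != 0 by rewrite invr_eq0 sqrtC_eq0.
have c_norm m : c m ^+ 2 + (m%:R * c m) ^+ 2 = 1.
  rewrite (_ : _ + _ = c m ^+ 2 * (1 + m%:R ^+ 2)); last by ring.
  by rewrite /c exprVn sqrtCK mulVf.
exists (2 * N).+1, (fun m => w m / c m ^+ (2 * N)), (fun m => rot2 (c m) (m%:R * c m)).
split=> [m | k _].
  by apply: rot2_inU2 => //; rewrite ?rmorphM /= ?rmorph_nat geC0_conj.
rewrite wE mulr_suml; apply: eq_bigr => m _.
rewrite /hw_vec det_mulmx det_rot2 c_norm mulr1 mulmx_rot2_00.
have -> : k 0 0 * c m + k 0 1 * (m%:R * c m) = c m * (k 0 0 + m%:R * k 0 1) by ring.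
by rewrite exprMn; field; rewrite expf_neq0.
Qed.

End UnitaryGroups.

Theorem corollary4p2 (R : realType) (N : nat) (L l : int)
  (hlL : `|l + L| <= N%:Z) :
  is_polyfun (@phi_sigma R N L l)
  /\ bi_equivariant N L (- l) (l + 2 * L) (@phi_sigma R N L l)
  /\ in_Ind N L (iota2 (@phi_sigma R N L l))
  /\ in_tau N L (iota2 (@phi_sigma R N L l))
  /\ in_tau_weight N L (- (l + L)) (iota2 (@phi_sigma R N L l)).
Proof.
have [j def_j] : exists j : nat, j%:Z = N%:Z + (l + L).
  by exists (absz (N%:Z + (l + L))); rewrite gez0_abs //; move: hlL; rewrite ler_norml; lia.
have j_le : (j <= 2 * N)%N by move: hlL; rewrite ler_norml; lia.
have phiE := phi_sigmaE (R := R) def_j j_le.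
have eq_phi : bi_equivariant N L (- l) (l + 2 * L) (@phi_sigma R N L l).
  by move=> t1 t2 k1 k2 Z *; rewrite !phiE; apply: phi_normal_bi_equivariant.
have tau_phi : in_tau N L (iota2 (@phi_sigma R N L l)).
  apply: in_tau_ext (in_tauZ ((-1) ^+ j) (in_tau_monomial R L j_le)) => k kk1.
  by rewrite /iota2 phiE phi_normal_inU2.
split; first exact: pf_ext _ (is_polyfun_phi_normal R N j (l + 2 * L)).
split=> //; split; first exact: bi_equivariant_in_Ind eq_phi.
split=> //; split=> //.
by apply: bi_equivariant_weight_vec eq_phi; lia.
Qed.
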